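(* Let $(A,n_1,\ldots,n_r)$ be an excessively clusterizable A-configuration. Then there exist nonnegative integers $m_1,\ldots,m_r$ such that $m_i=0$ whenever $n_i=0$, $m_1+\cdots+m_r=|A|$, and $(A,m_1,\ldots,m_r)$ is a simply excessively clusterizable A-configuration.
   Context: Setting: $\Phi$ a simply laced root system of rank $r$ with positive roots $\Phi^+$, simple roots $\alpha_1,\ldots,\alpha_r$, scalar product normalized so $(\alpha,\alpha)=2$. $\mathrm{supp}\,v$ for $v=\sum a_j\alpha_j$ is $\{\alpha_j:a_j\ne0\}$. For $A\subseteq\Phi^+$ and $I\subseteq\{1,\ldots,r\}$, $R_I(A)$ is the set of $\alpha\in A$ whose support contains some $\alpha_j$, $j\in I$. An A-configuration is $(A,n_1,\ldots,n_r)$ with $A\subseteq\Phi^+$, $n_j\in\mathbb Z_{\ge0}$, $\sum n_j=|A|$. A set $A\subseteq\Phi^+$ is an $I$-cluster if: (1) coefficients of $\alpha_j$, $j\in I$, in elements of $A$ are $\le1$; (2) $(\alpha,\beta)\ne-1$ for distinct $\alpha,\beta\in A$; (3) if $\alpha,\beta\in A$, $(\alpha,\beta)=0$, then $\mathrm{supp}\,\alpha\cap\mathrm{supp}\,\beta$ contains no $\alpha_j$ with $j\in I$. With $I=\{j:n_j>0\}$, $(A,n)$ is excessive if $|R_I(A)|=\sum n_j$ and $|R_J(A)|>\sum_{j\in J}n_j$ for all nonempty $J\subsetneq I$; it is an excessive cluster if moreover $A$ is an $I$-cluster; it is a simple excessive cluster if it is an excessive cluster and $|I|=1$. Excessively clusterizable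 (recursively on $|A|$): $(\varnothing,0,\ldots,0)$ is; for $|A|>0$, $(A,n)$ is if there is nonempty $I$ with $n_j>0$ for $j\in I$ such that, with $k_j=n_j$ ($j\in I$), $k_j=0$ otherwise, $|R_I(A)|=\sum k_j$, $(R_I(A),k)$ is an excessive cluster and $(A\setminus R_I(A),n-k)$ is excessively clusterizable. Simply excessively clusterizable (recursively on $|A|$): $(\varnothing,0,\ldots,0)$ is; for $|A|>0$, $(A,n)$ is if there is an index $i$ with $n_i>0$ such that, with $k_i=n_i$ and $k_j=0$ for $j\ne i$, $|R_{\{i\}}(A)|=n_i$, $(R_{\{i\}}(A),k)$ is a simple excessive cluster, and $(A\setminus R_{\{i\}}(A),n-k)$ is simply excessively clusterizable. *)

From HB Require Import structures.
From mathcomp Require Import all_boot all_order all_algebra.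
Set Implicit Arguments. Unset Strict Implicit. Unset Printing Implicit Defensive.
Import GRing.Theory Num.Theory.
Local Open Scope ring_scope.

(* Elements of the root lattice, written in the basis of simple roots:
   v = sum_j v j * alpha_j. *)
Definition vec (r : nat) := {ffun 'I_r -> int}.

Definition sprod (r : nat) (C : 'I_r -> 'I_r -> int) (v w : vec r) : int :=
  \sum_(i < r) \sum_(j < r) v i * C i j * w j.

Definition simply_laced_cartan (r : nat) (C : 'I_r -> 'I_r -> int) : Prop :=
  [/\ (forall i j, C i j = C j i),
      (forall i, C i i = 2),
      (forall i j, i != j -> C i j = 0 \/ C i j = -1)
    & (forall v : vec r, (exists i, v i != 0) -> 0 < sprod C v v)].

Definition simple_root (r : nat) (i : 'I_r) : vec r :=
  [ffun j => if i == j then 1 else 0].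

Definition sreflect (r : nat) (C : 'I_r -> 'I_r -> int) (i : 'I_r) (v : vec r) : vec r :=
  [ffun j => v j - sprod C v (simple_root i) * simple_root i j].

(* Roots: the Weyl group orbit of the simple roots. *)
Definition is_root (r : nat) (C : 'I_r -> 'I_r -> int) (v : vec r) : Prop :=
  exists (s : seq 'I_r) (j : 'I_r), v = foldr (sreflect C) (simple_root j) s.

Definition is_pos_root (r : nat) (C : 'I_r -> 'I_r -> int) (v : vec r) : Prop :=
  is_root C v /\ (forall j, 0 <= v j).

Definition meetsI (r : nat) (I : {set 'I_r}) (a : vec r) : bool :=
  [exists j in I, a j != 0].

Definition R_I (r : nat) (I : {set 'I_r}) (A : seq (vec r)) : seq (vec r) :=
  filter (meetsI I) A.

Definition supp_n (r : nat) (n : 'I_r -> nat) : {set 'I_r} :=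
  [set j | (0 < n j)%N].

Definition is_cluster (r : nat) (C : 'I_r -> 'I_r -> int) (I : {set 'I_r})
    (A : seq (vec r)) : Prop :=
  [/\ (forall a j, a \in A -> j \in I -> a j <= 1),
      (forall a b, a \in A -> b \in A -> a != b -> sprod C a b != -1)
    & (forall a b, a \in A -> b \in A -> sprod C a b = 0 ->
         forall j, j \in I -> ~~ ((a j != 0) && (b j != 0)))].

Definition excessive (r : nat) (A : seq (vec r)) (n : 'I_r -> nat) : Prop :=
  size (R_I (supp_n n) A) = (\sum_(j < r) n j)%N /\
  (forall J : {set 'I_r}, J != set0 -> J \proper supp_n n ->
     (\sum_(j in J) n j < size (R_I J A))%N).

Definition excessive_cluster (r : nat) (C : 'I_r -> 'I_r -> int)
    (A : seq (vec r)) (n : 'I_r -> nat) : Prop :=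
  excessive A n /\ is_cluster C (supp_n n) A.

Definition simple_excessive_cluster (r : nat) (C : 'I_r -> 'I_r -> int)
    (A : seq (vec r)) (n : 'I_r -> nat) : Prop :=
  excessive_cluster C A n /\ #|supp_n n| = 1%N.

Definition restr (r : nat) (I : {set 'I_r}) (n : 'I_r -> nat) : 'I_r -> nat :=
  fun j => if j \in I then n j else 0%N.

Inductive exc_clusterizable (r : nat) (C : 'I_r -> 'I_r -> int) :
    seq (vec r) -> ('I_r -> nat) -> Prop :=
| ExcNil (n : 'I_r -> nat) : (forall j, n j = 0%N) -> exc_clusterizable C [::] n
| ExcStep (A : seq (vec r)) (n : 'I_r -> nat) (I : {set 'I_r}) :
    (0 < size A)%N -> I != set0 -> (forall j, j \in I -> 0 < n j)%N ->
    size (R_I I A) = (\sum_(j < r) restr I n j)%N ->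
    excessive_cluster C (R_I I A) (restr I n) ->
    exc_clusterizable C [seq a <- A | ~~ meetsI I a] (fun j => n j - restr I n j)%N ->
    exc_clusterizable C A n.

Inductive simply_exc_clusterizable (r : nat) (C : 'I_r -> 'I_r -> int) :
    seq (vec r) -> ('I_r -> nat) -> Prop :=
| SExcNil (n : 'I_r -> nat) : (forall j, n j = 0%N) -> simply_exc_clusterizable C [::] n
| SExcStep (A : seq (vec r)) (n : 'I_r -> nat) (i : 'I_r) :
    (0 < size A)%N -> (0 < n i)%N ->
    size (R_I [set i] A) = n i ->
    simple_excessive_cluster C (R_I [set i] A) (restr [set i] n) ->
    simply_exc_clusterizable C [seq a <- A | ~~ meetsI [set i] a]
      (fun j => n j - restr [set i] n j)%N ->
    simply_exc_clusterizable C A n.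

From HB Require Import structures.
From mathcomp Require Import all_boot all_order all_algebra.
From Stdlib Require Import FunctionalExtensionality.

Set Implicit Arguments.
Unset Strict Implicit.
Unset Printing Implicit Defensive.

(* Each step of an excessive clusterization removes an excessive I-cluster
   R_I(A).  Being an I-cluster is inherited by subsets of A and by subsets
   of I, so this block can be removed one index j of I at a time: the roots
   of R_I(A) with alpha_j in their support form a {j}-cluster, and a
   {j}-cluster with m_j equal to its size is automatically a simple
   excessive cluster, because a singleton has no nonempty proper subset.
   The new multiplicities are these sizes, which vanish outside I. *)

Section SimplyExcessivelyClusterizable.

Variables (r : nat) (C : 'I_r -> 'I_r -> int).

Lemma meetsI1 (j : 'I_r) (a : vec r) : meetsI [set j] a = (a j != 0%R).
Proof.
apply/existsP/idP => [[x /andP[/set1P -> //]] | aj].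
by exists j; rewrite set11 aj.
Qed.

Lemma meetsIU (I J : {set 'I_r}) (a : vec r) :
  meetsI (I :|: J) a = meetsI I a || meetsI J a.
Proof.
apply/existsP/orP => [[x /andP [/setUP [xI | xJ] ax]] | [] /existsP [x /andP [xIJ ax]]].
- by left; apply/existsP; exists x; rewrite xI.
- by right; apply/existsP; exists x; rewrite xJ.
- by exists x; rewrite inE xIJ.
- by exists x; rewrite inE xIJ orbT.
Qed.

Lemma is_cluster_sub (I J : {set 'I_r}) (X Y : seq (vec r)) :
  J \subset I -> {subset Y <= X} -> is_cluster C I X -> is_cluster C J Y.
Proof.
move=> /subsetP JI YX [le1 no_m1 disj]; split.
- by move=> a j aY jJ; apply: le1; [apply: YX | apply: JI].
- by move=> a b aY bY; apply: no_m1; apply: YX.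
- by move=> a b aY bY ab0 j jJ; apply: disj => //; [apply: YX | apply: YX | apply: JI].
Qed.

Lemma sum_restr (I : {set 'I_r}) (n : 'I_r -> nat) :
  (\sum_(j < r) restr I n j)%N = (\sum_(j in I) n j)%N.
Proof. by rewrite [RHS]big_mkcond; apply: eq_bigr => j _; rewrite /restr. Qed.

Lemma supp_restr1 (j : 'I_r) (n : 'I_r -> nat) :
  (0 < n j)%N -> supp_n (restr [set j] n) = [set j].
Proof.
move=> nj; apply/setP => i; rewrite !inE /restr inE.
by case: (eqVneq i j) => [->|]; rewrite ?nj.
Qed.

Lemma simple_excessive_cluster_R1 (j : 'I_r) (A : seq (vec r)) (n : 'I_r -> nat) :
  (0 < n j)%N -> size (R_I [set j] A) = n j ->
  is_cluster C [set j] (R_I [set j] A) ->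
  simple_excessive_cluster C (R_I [set j] A) (restr [set j] n).
Proof.
move=> nj sizeR clR; rewrite /simple_excessive_cluster /excessive_cluster /excessive.
rewrite supp_restr1 // cards1; split=> //; split=> //; split.
  by rewrite {1}/R_I filter_id sum_restr big_set1.
move=> J /negbTE J0 /properP [].
by rewrite subset1 J0 orbF => /eqP -> [x /set1P ->]; rewrite set11.
Qed.

Lemma simply_exc_clusterizable_size (A : seq (vec r)) (m : 'I_r -> nat) :
  simply_exc_clusterizable C A m -> (\sum_(j < r) m j)%N = size A.
Proof.
elim=> {A m} [n n0 | A n i _ _ sizeR _ _ IH]; first by rewrite big1.
have sum_rest : (\sum_(j < r) (n j - restr [set i] n j))%N =
                (\sum_(j < r | j != i) n j)%N.
  rewrite (bigD1 i) //= /restr inE eqxx subnn add0n.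
  by apply: eq_bigr => j /negbTE ji; rewrite inE ji subn0.
rewrite -(count_predC (meetsI [set i]) A) -!size_filter.
by rewrite (bigD1 i) //= -sizeR -IH sum_rest.
Qed.

Lemma simply_exc_clusterizable_supp (A : seq (vec r)) (m : 'I_r -> nat) (j : 'I_r) :
  simply_exc_clusterizable C A m -> (forall a, a \in A -> a j = 0%R) -> m j = 0%N.
Proof.
elim=> {A m} [n n0 | A n i _ ni sizeR _ _ IH] Aj0; first exact: n0.
case: (eqVneq i j) => [eq_ij | ij].
  have [a aR] : exists a, a \in R_I [set i] A.
    by case: (R_I [set i] A) sizeR ni => [<- // | a B _ _]; exists a; rewrite mem_head.
  move: aR; rewrite mem_filter meetsI1 eq_ij => /andP [aj /Aj0 a0].
  by rewrite a0 eqxx in aj.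
have := IH (fun a aA => Aj0 a (mem_subseq (filter_subseq _ A) aA)).
by rewrite /restr inE eq_sym (negbTE ij) subn0.
Qed.

Lemma simply_exc_clusterizable_cons (j : 'I_r) (A : seq (vec r)) (m : 'I_r -> nat) :
  is_cluster C [set j] (R_I [set j] A) ->
  simply_exc_clusterizable C [seq a <- A | ~~ meetsI [set j] a] m ->
  simply_exc_clusterizable C A
    (fun i => if i == j then size (R_I [set j] A) else m i).
Proof.
move=> clR clz; have mj0 : m j = 0%N.
  apply: (simply_exc_clusterizable_supp clz) => a.
  by rewrite mem_filter meetsI1 negbK => /andP [/eqP].
set m' := fun i => _.
have [R0 | Rpos] := posnP (size (R_I [set j] A)).
  have -> : m' = m.
    by apply: functional_extensionality => i; rewrite /m' R0; case: eqP => // ->.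
  suff <- : [seq a <- A | ~~ meetsI [set j] a] = A by [].
  have R_nil : R_I [set j] A = [::] by apply/eqP; rewrite -size_eq0 R0.
  by apply/all_filterP; rewrite (all_predC (meetsI [set j])) has_filter -/(R_I _ _) R_nil.
have m'j : m' j = size (R_I [set j] A) by rewrite /m' eqxx.
apply: (SExcStep (i := j)).
- by apply: leq_trans Rpos _; rewrite size_filter count_size.
- by rewrite m'j.
- by rewrite m'j.
- by apply: simple_excessive_cluster_R1; rewrite ?m'j.
- have -> : (fun i => m' i - restr [set j] m' i)%N = m => //.
  apply: functional_extensionality => i; rewrite /restr inE /m'.
  by case: eqP => [-> | _]; rewrite ?subnn ?subn0.
Qed.

Lemma simply_exc_clusterizable_peel (s : seq 'I_r) (A : seq (vec r)) (m : 'I_r -> nat) :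
  is_cluster C [set x in s] (R_I [set x in s] A) ->
  simply_exc_clusterizable C [seq a <- A | ~~ meetsI [set x in s] a] m ->
  exists m', (forall i, i \notin s -> m' i = m i) /\ simply_exc_clusterizable C A m'.
Proof.
elim: s A m => [|j s IH] A m clR clz.
  exists m; split=> //; suff <- : [seq a <- A | ~~ meetsI [set x in [::]] a] = A by [].
  by apply/all_filterP/allP => a _; apply/existsP => -[x]; rewrite inE.
have meets_cons a : meetsI [set x in j :: s] a = meetsI [set j] a || meetsI [set x in s] a.
  by rewrite set_cons meetsIU.
have sub_R (I : {set 'I_r}) (B : seq (vec r)) :
    (forall a, meetsI I a -> meetsI [set x in j :: s] a) -> {subset B <= A} ->
    {subset R_I I B <= R_I [set x in j :: s] A}.
  by move=> IJ BA a; rewrite !mem_filter => /andP [/IJ -> /BA].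
set A1 := [seq a <- A | ~~ meetsI [set j] a].
have clR1 : is_cluster C [set x in s] (R_I [set x in s] A1).
  apply: is_cluster_sub clR; first by rewrite set_cons subsetUr.
  apply: sub_R => [a|]; first by rewrite meets_cons orbC => ->.
  exact: mem_subseq (filter_subseq _ A).
have clz1 : simply_exc_clusterizable C [seq a <- A1 | ~~ meetsI [set x in s] a] m.
  rewrite -filter_predI (eq_filter (a2 := fun a => ~~ meetsI [set x in j :: s] a)) //.
  by move=> a /=; rewrite meets_cons negb_or andbC.
have [m1 [m1_out clzA1]] := IH A1 m clR1 clz1.
exists (fun i => if i == j then size (R_I [set j] A) else m1 i); split.
  by move=> i; rewrite inE negb_or => /andP [/negbTE -> /m1_out].
apply: simply_exc_clusterizable_cons clzA1.
apply: is_cluster_sub clR; first by rewrite set_cons subsetUl.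
by apply: sub_R => // a; rewrite meets_cons => ->.
Qed.

Lemma exc_clusterizable_simply (A : seq (vec r)) (n : 'I_r -> nat) :
  exc_clusterizable C A n ->
  exists m, (forall i, n i = 0%N -> m i = 0%N) /\ simply_exc_clusterizable C A m.
Proof.
elim=> {A n} [n n0 | A n I _ _ Ipos _ [_ clR] _ [m' [m'0 clz']]].
  by exists n; split=> //; apply: SExcNil.
have supp_I : supp_n (restr I n) = I.
  by apply/setP => i; rewrite inE /restr; case: ifP => [/Ipos | _].
rewrite supp_I -[I]set_enum in clR; rewrite -[I]set_enum in clz'.
have [m [m_out clz]] := simply_exc_clusterizable_peel clR clz'.
exists m; split=> // i ni0.
have iI : i \notin I by apply/negP => /Ipos; rewrite ni0.
by rewrite m_out ?mem_enum // m'0 // /restr (negbTE iI) ni0.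
Qed.

End SimplyExcessivelyClusterizable.

Theorem mainTheorem11 (r : nat) (C : 'I_r -> 'I_r -> int)
    (A : seq (vec r)) (n : 'I_r -> nat) :
  simply_laced_cartan C ->
  uniq A -> (forall a, a \in A -> is_pos_root C a) ->
  (\sum_(j < r) n j)%N = size A ->
  exc_clusterizable C A n ->
  exists m : 'I_r -> nat,
    [/\ (forall i, n i = 0%N -> m i = 0%N),
        (\sum_(j < r) m j)%N = size A
      & simply_exc_clusterizable C A m].
Proof.
move=> _ _ _ _ /exc_clusterizable_simply [m [m_out clz]].
by exists m; split=> //; apply: simply_exc_clusterizable_size clz.
Qed.
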